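(* Let $N$ be a positive integer, $t$ a nonnegative integer with $2t<N$, and $\epsilon_s>0$. Let $\mathcal A=\{x_1\le x_2\le\cdots\le x_N\}$ be $N$ real data points in an interval $[x_L,x_U]$, with $R=x_U-x_L$, and suppose the $N-2t$ centermost data points cover a range of length at least $d$, where $0<d<R$. Generate a split point $r\in[x_L,x_U]$ by the exponential mechanism with density (with respect to Lebesgue measure on $[x_L,x_U]$) proportional to $\exp\{\epsilon_s q(r)/2\}$, where $$q(r)=-\Big|\,|\mathcal A\cap[x_L,r)|-|\mathcal A\cap[r,x_U]|\,\Big|,$$ and split $\mathcal A$ into the blocks $\mathcal A\cap[x_L,r)$ and $\mathcal A\cap[r,x_U]$. Then the smaller of the two resulting blocks contains at least $t$ data points with probability at least $$\frac{d}{Re^{-\epsilon_s}+d(1-e^{-\epsilon_s})}.$$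
   Context: This randomized choice of $r$ is an $\epsilon_s$-differentially private version of splitting at the median (the score $q$ has sensitivity $1$). *)

From HB Require Import structures.
From mathcomp Require Import all_boot all_order all_algebra.
From mathcomp Require Import all_classical all_reals all_analysis.
Set Implicit Arguments. Unset Strict Implicit. Unset Printing Implicit Defensive.
Import Order.TTheory GRing.Theory Num.Theory.
Import numFieldNormedType.Exports.
Local Open Scope classical_set_scope.
Local Open Scope ring_scope.

(* Data points x : 'I_N -> R (a multiset, counted with multiplicity). *)

Definition cnt_left (R : realType) (N : nat) (x : 'I_N -> R) (xL r : R) : nat :=
  #|[set i : 'I_N | (xL <= x i) && (x i < r)]|.

Definition cnt_right (R : realType) (N : nat) (x : 'I_N -> R) (xU r : R) : nat :=
  #|[set i : 'I_N | (r <= x i) && (x i <= xU)]|.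

Definition split_score (R : realType) (N : nat) (x : 'I_N -> R) (xL xU r : R) : R :=
  - `| (cnt_left x xL r)%:R - (cnt_right x xU r)%:R |.

Definition exp_weight (R : realType) (N : nat) (x : 'I_N -> R) (xL xU eps r : R) : R :=
  expR (eps * split_score x xL xU r / 2).

Definition expmech_prob (R : realType) (N : nat) (x : 'I_N -> R) (xL xU eps : R)
  (E : set R) : R :=
  (\int[(@lebesgue_measure R)]_(r in `[xL, xU] `&` E) exp_weight x xL xU eps r)
  / (\int[(@lebesgue_measure R)]_(r in `[xL, xU]) exp_weight x xL xU eps r).

From mathcomp Require Import all_boot all_order all_algebra.
From mathcomp Require Import all_classical all_reals all_analysis.
From mathcomp Require Import ring lra zify measurable_realfun.
Import Order.TTheory GRing.Theory Num.Theory.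
Import numFieldNormedType.Exports.
Local Open Scope classical_set_scope.
Local Open Scope ring_scope.

(* Since |a - b| = a + b - 2 min(a, b) and the two blocks hold all N points, the
   score is 2m - N, where m is the size of the smaller block. Hence the weight is
   at least c = exp(eps (2t - N) / 2) on the good event {m >= t} and at most
   c e^-eps off it. The good event contains (x_t, x_(N-t-1)], whose length is at
   least d, so if g >= d is the measure of the good part of [xL, xU] the
   probability is at least c g / (c g + c e^-eps (R - g)), which increases in g. *)

Lemma ler_ratio_of_bounds (R : realFieldType) (g m L c e G B : R) :
  0 < g -> g <= m -> 0 < c -> 0 < e < 1 -> 0 <= B ->
  c * m <= G -> B <= c * e * (L - m) ->
  g / (L * e + g * (1 - e)) <= G / (G + B).
Proof.
move=> g0 gm c0 /andP[e0 e1] B0 mG BL.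
have G0 : 0 < G by apply: lt_le_trans mG; apply: mulr_gt0 => //; lra.
have Lm : m <= L.
  have : 0 <= c * e * (L - m) by exact: le_trans BL.
  by rewrite pmulr_rge0 ?mulr_gt0 // subr_ge0.
rewrite ler_pdivrMr; last by apply: addr_gt0; apply: mulr_gt0 => //; lra.
rewrite mulrAC ler_pdivlMr; last lra.
have gB : g * B <= g * (c * e * (L - m)) by rewrite ler_pM2l.
have cmG : c * m * (e * (L - g)) <= G * (e * (L - g)).
  by rewrite ler_wpM2r // mulr_ge0 //; lra.
have cm : 0 <= c * e * L * (m - g).
  by rewrite !mulr_ge0 //; lra.
nra.
Qed.

Section WeightRatio.
Context {d} {T : measurableType d} {R : realType} (mu : {measure set T -> \bar R}).
Variables (A E : set T) (w : T -> R) (c e g : R).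
Hypotheses (mA : measurable A) (mE : measurable E) (muA : (mu A < +oo)%E).
Hypotheses (w_int : mu.-integrable A (EFin \o w)) (w_ge0 : forall r, A r -> 0 <= w r).
Hypotheses (w_in : forall r, A r -> E r -> c <= w r)
  (w_out : forall r, A r -> ~ E r -> w r <= c * e).
Hypotheses (c0 : 0 < c) (e01 : 0 < e < 1) (g0 : 0 < g)
  (g_le : (g%:E <= mu (A `&` E))%E).

Let mAE : measurable (A `&` E). Proof. exact: measurableI. Qed.
Let mAnE : measurable (A `&` ~` E). Proof. exact/measurableI/measurableC. Qed.

Let finite_sub S : measurable S -> S `<=` A -> (mu S < +oo)%E.
Proof. by move=> mS SA; apply: le_lt_trans muA; apply: le_measure; rewrite ?inE. Qed.

Lemma weight_ratio_ge :
  g / (fine (mu A) * e + g * (1 - e))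
  <= (\int[mu]_(r in A `&` E) w r) / (\int[mu]_(r in A) w r).
Proof.
have AU : A = (A `&` E) `|` (A `&` ~` E) by rewrite -setIUr setUCr setIT.
have AEnE : [disjoint A `&` E & A `&` ~` E].
  by apply/disj_set2P; rewrite setIACA setICr setI0.
have cst_int S k : measurable S -> S `<=` A -> mu.-integrable S (EFin \o cst k).
  move=> mS SA; apply: measurable_bounded_integrable => //; last exact: bounded_cst.
  exact: finite_sub.
have w_int_sub S : measurable S -> S `<=` A -> mu.-integrable S (EFin \o w).
  by move=> mS SA; apply: integrableS w_int.
have muAE : fine (mu A) = fine (mu (A `&` E)) + fine (mu (A `&` ~` E)).
  rewrite {1}AU measureU //; last by apply/disj_set2P.
  by rewrite fineD // ge0_fin_numE ?finite_sub //; apply: subIsetl.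
have intA : \int[mu]_(r in A) w r =
    \int[mu]_(r in A `&` E) w r + \int[mu]_(r in A `&` ~` E) w r.
  by rewrite {1}AU Rintegral_setU // -AU.
have int_in : c * fine (mu (A `&` E)) <= \int[mu]_(r in A `&` E) w r.
  rewrite -Rintegral_cst //; apply: le_Rintegral => //.
  - exact: cst_int (@subIsetl _ _ _).
  - exact: w_int_sub (@subIsetl _ _ _).
  - by move=> r [Ar Er]; apply: w_in.
have int_out : \int[mu]_(r in A `&` ~` E) w r <= c * e * fine (mu (A `&` ~` E)).
  rewrite -Rintegral_cst //; apply: le_Rintegral => //.
  - exact: w_int_sub (@subIsetl _ _ _).
  - exact: cst_int (@subIsetl _ _ _).
  - by move=> r [Ar nEr]; apply: w_out.
have g_fine : g <= fine (mu (A `&` E)).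
  rewrite -lee_fin fineK //; rewrite ge0_fin_numE ?finite_sub //; exact: subIsetl.
rewrite intA; apply: ler_ratio_of_bounds g_fine _ _ _ int_in _ => //.
- by apply: Rintegral_ge0 => // r [Ar _]; apply: w_ge0.
- by rewrite muAE addrAC subrr add0r.
Qed.
End WeightRatio.

Lemma leq_card_ord_range N (P : pred 'I_N) a b : (b <= N)%N ->
  (forall i : 'I_N, (a <= i < b)%N -> P i) -> (b - a <= #|P|)%N.
Proof.
move=> bN aPb.
have lt_shift k : (k < b - a)%N -> (a + k < N)%N by lia.
pose f (k : 'I_(b - a)) : 'I_N := Ordinal (lt_shift _ (ltn_ord k)).
have f_inj : injective f by move=> k1 k2 /(congr1 val) /= /addnI /val_inj.
rewrite -[X in (X <= _)%N]card_ord -(fintype.card_image f_inj).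
apply: subset_leq_card; apply/fintype.subsetP => _ /fintype.imageP [k _ ->].
by apply: aPb => /=; have := ltn_ord k; lia.
Qed.

Section SplitScore.
Context {R : realType} {N : nat} (x : 'I_N -> R) (xL xU : R).

Lemma cnt_leftE r : cnt_left x xL r = #|[pred i | (xL <= x i) && (x i < r)]|.
Proof. by apply: eq_card => i; rewrite inE /=; apply/idP/idP => [/set_mem|/mem_set]. Qed.

Lemma cnt_rightE r : cnt_right x xU r = #|[pred i | (r <= x i) && (x i <= xU)]|.
Proof. by apply: eq_card => i; rewrite inE /=; apply/idP/idP => [/set_mem|/mem_set]. Qed.

Definition small_block (r : R) : nat :=
  minn (cnt_left x xL r) (cnt_right x xU r).

Lemma cnt_left_nondecreasing :
  {homo (fun r => (cnt_left x xL r)%:R : R) : r s / r <= s}.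
Proof.
move=> r s rs; rewrite ler_nat !cnt_leftE; apply: subset_leq_card.
apply/fintype.subsetP => i; rewrite !inE => /andP[-> xr]; exact: lt_le_trans rs.
Qed.

Lemma cnt_right_nonincreasing :
  {homo (fun r => (cnt_right x xU r)%:R : R) : r s /~ s <= r}.
Proof.
move=> r s rs; rewrite ler_nat !cnt_rightE; apply: subset_leq_card.
by apply/fintype.subsetP => i; rewrite !inE => /andP[/(le_trans rs) -> ->].
Qed.

Lemma measurable_small_block : measurable_fun setT (fun r => (small_block r)%:R : R).
Proof.
rewrite /small_block -minEnat; under eq_fun do rewrite natr_min.
apply: measurable_minr.
- exact: nondecreasing_measurable cnt_left_nondecreasing.
- exact: nonincreasing_measurable cnt_right_nonincreasing.
Qed.

Lemma measurable_small_block_ge t : measurable [set r | (t <= small_block r)%N].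
Proof.
have -> : [set r | (t <= small_block r)%N] =
    (fun r => (small_block r)%:R : R) @^-1` `[t%:R, +oo[.
  by apply/seteqP; split => r /=; rewrite in_itv /= andbT ler_nat.
rewrite -[X in measurable X]setTI.
by apply: measurable_small_block => //; exact: measurable_itv.
Qed.

Lemma measurable_exp_weight (eps : R) : measurable_fun setT (exp_weight x xL xU eps).
Proof.
apply: measurableT_comp; first exact: measurable_expR.
apply: measurableT_comp (mulrr_measurable _) _.
apply: measurableT_comp (mulrl_measurable _) _.
apply: measurableT_comp; first exact: oppr_measurable.
apply: measurableT_comp; first exact: normr_measurable.
apply: nondecreasing_measurable => // r s rs.
by apply: lerB; [exact: cnt_left_nondecreasing | exact: cnt_right_nonincreasing].
Qed.

Lemma exp_weight_le1 (eps r : R) : 0 <= eps -> exp_weight x xL xU eps r <= 1.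
Proof.
move=> eps0; rewrite /exp_weight /split_score expR_le1 mulrN mulNr oppr_le0.
by rewrite divr_ge0 ?mulr_ge0.
Qed.

Lemma integrable_exp_weight (eps : R) (A : set R) : 0 <= eps ->
  measurable A -> (lebesgue_measure A < +oo)%E ->
  lebesgue_measure.-integrable A (EFin \o exp_weight x xL xU eps).
Proof.
move=> eps0 mA muA; apply: measurable_bounded_integrable => //.
  exact: measurable_funTS (measurable_exp_weight eps).
exists 1; split; first exact: num_real.
move=> M M1 r _ /=; apply: ltW; apply: le_lt_trans M1.
by rewrite ger0_norm ?expR_ge0 ?exp_weight_le1.
Qed.

Hypothesis x_in : forall i, xL <= x i <= xU.

Lemma cnt_left_add_right r : (cnt_left x xL r + cnt_right x xU r)%N = N.
Proof.
rewrite cnt_leftE cnt_rightE -[in RHS](card_ord N) -(cardC [pred i | (xL <= x i) && (x i < r)]).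
congr addn; apply: eq_card => i; have /andP[xLi xiU] := x_in i.
by rewrite !inE xLi xiU andbT -leNgt.
Qed.

Lemma split_scoreE r : split_score x xL xU r = 2 * (small_block r)%:R - N%:R.
Proof.
rewrite /split_score /small_block -minEnat natr_min minr_absE.
by rewrite -natrD cnt_left_add_right; field.
Qed.

Lemma exp_weight_ge (eps : R) t (r : R) : 0 <= eps -> (t <= small_block r)%N ->
  expR (eps * (2 * t%:R - N%:R) / 2) <= exp_weight x xL xU eps r.
Proof.
rewrite /exp_weight split_scoreE ler_expR -(ler_nat R) => eps0 tm.
by rewrite ler_pM2r // ler_wpM2l // lerB // ler_pM2l.
Qed.

Lemma exp_weight_le (eps : R) t (r : R) : 0 <= eps -> (small_block r < t)%N ->
  exp_weight x xL xU eps r <= expR (eps * (2 * t%:R - N%:R) / 2) * expR (- eps).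
Proof.
rewrite /exp_weight split_scoreE -expRD ler_expR -(ler_nat R) -natr1 => eps0 mt.
nra.
Qed.

Hypothesis x_sorted : forall i j : 'I_N, (i <= j)%N -> x i <= x j.

Lemma small_block_ge t (i j : 'I_N) (r : R) : i = t :> nat -> j = (N - t.+1)%N :> nat ->
  x i < r <= x j -> (t <= small_block r)%N.
Proof.
move=> it jt /andP[ir rj]; have := ltn_ord i; rewrite it => tN.
rewrite leq_min cnt_leftE cnt_rightE; apply/andP; split.
- rewrite -[t]subn0; apply: leq_card_ord_range => [|k /andP[_ kt]]; first lia.
  have /andP[xLk _] := x_in k; rewrite inE xLk /=.
  by apply: le_lt_trans ir; apply: x_sorted; lia.
- apply: (@leq_trans (N - (N - t.+1))); first lia.
  apply: leq_card_ord_range => // k /andP[jk _].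
  have /andP[_ xkU] := x_in k; rewrite inE xkU andbT.
  by apply: le_trans rj _; apply: x_sorted; lia.
Qed.

Lemma measure_small_block_ge t (i j : 'I_N) : i = t :> nat ->
  j = (N - t.+1)%N :> nat -> x i < x j ->
  ((x j - x i)%:E <= lebesgue_measure (`[xL, xU] `&` [set r | (t <= small_block r)%N]))%E.
Proof.
move=> it jt ij.
have -> : (x j - x i)%:E = lebesgue_measure `]x i, x j].
  by rewrite lebesgue_measure_itv /= lte_fin ij.
rewrite le_measure // ?inE.
- exact: measurable_itv.
- exact: measurableI (measurable_itv _) (measurable_small_block_ge _).
- move=> r /=; rewrite !in_itv /= => /andP[ir rj]; split.
    have /andP[xLi _] := x_in i; have /andP[_ xjU] := x_in j.
    by rewrite (le_trans xLi (ltW ir)) (le_trans rj xjU).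
  by apply: small_block_ge it jt _; rewrite ir rj.
Qed.

End SplitScore.

Theorem mainTheorem3 (R : realType) (N t : nat) (eps xL xU d : R)
  (x : 'I_N -> R) :
  (0 < N)%N -> (2 * t < N)%N -> 0 < eps ->
  (forall i : 'I_N, xL <= x i <= xU) ->
  (forall i j : 'I_N, (i <= j)%N -> x i <= x j) ->
  (forall i j : 'I_N, nat_of_ord i = t -> nat_of_ord j = (N - t.+1)%N ->
     d <= x j - x i) ->
  0 < d -> d < xU - xL ->
  d / ((xU - xL) * expR (- eps) + d * (1 - expR (- eps)))
  <= expmech_prob x xL xU eps
       [set r | (t <= minn (cnt_left x xL r) (cnt_right x xU r))%N].
Proof.
move=> N0 tN eps0 x_in x_sorted spread d0 dR.
have muA : lebesgue_measure `[xL, xU] = (xU - xL)%:E.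
  by rewrite lebesgue_measure_itv /= lte_fin ifT //; lra.
have muA_fin : (lebesgue_measure `[xL, xU] < +oo)%E by rewrite muA ltry.
have [lt_tN lt_jN] : (t < N)%N /\ (N - t.+1 < N)%N by split; lia.
pose i := Ordinal lt_tN; pose j := Ordinal lt_jN.
set E := [set r | _].
have d_le : (d%:E <= lebesgue_measure (`[xL, xU] `&` E))%E.
  have dij : d <= x j - x i by exact: spread.
  have ij : x i < x j by rewrite -subr_gt0; exact: lt_le_trans dij.
  apply: le_trans (measure_small_block_ge _ _ _ x_in x_sorted t i j erefl erefl ij).
  by rewrite lee_fin.
have mE : measurable E by exact: measurable_small_block_ge.
have -> : xU - xL = fine (lebesgue_measure `[xL, xU]) by rewrite muA.
(* the weight of a split whose smaller block has exactly t points *)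
apply: (weight_ratio_ge _ _ _ _ (expR (eps * (2 * t%:R - N%:R) / 2))) => //.
- by apply: integrable_exp_weight => //; exact: ltW.
- by move=> r _; exact: expR_ge0.
- by move=> r _ Er; apply: exp_weight_ge => //; exact: ltW.
- by move=> r _ /negP; rewrite -ltnNge => Er; apply: exp_weight_le => //; exact: ltW.
- exact: expR_gt0.
- by rewrite expR_gt0 expR_lt1 oppr_lt0.
Qed.
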